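(* Let $\Gamma$ be a distance-regular graph with diameter $D\ge 3$ and valency $k$, and assume $a_i=0$ for $0\le i\le D-2$ and $a_{D-1}\neq 0$. Let $M$ be the $D\times D$ tridiagonal matrix with rows and columns indexed by $0,1,\dots,D-1$, whose diagonal is $(0,0,\dots,0,k-c_{D-1})$, whose superdiagonal entries are $M_{i,i+1}=b_i$ ($0\le i\le D-2$) and whose subdiagonal entries are $M_{i,i-1}=c_i$ ($1\le i\le D-1$). Then: (i) for every $\theta\in\mathbb{R}$ the pair $\theta,k$ is tight; (ii) for every real number $\theta$ that is an eigenvalue of $M$, the pair $\theta,-k$ is tight; (iii) $\Gamma$ has no further tight pairs, i.e. if $\theta,\theta'\in\mathbb{R}$ form a tight pair then either one of them equals $k$, or one of them equals $-k$ and the other is an eigenvalue of $M$.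
   Context: $\Gamma$ is a finite connected undirected graph without loops or multiple edges, distance-regular with diameter $D$, intersection numbers $a_i,b_i,c_i$ ($c_0=0$, $b_D=0$, $c_1=1$), valency $k=b_0$, and $c_i+a_i+b_i=k$ for $0\le i\le D$. For $\theta\in\mathbb{R}$, the pseudo cosine sequence for $\theta$ is the sequence of reals $\sigma_0,\dots,\sigma_D$ with $\sigma_0=1$ and $c_i\sigma_{i-1}+a_i\sigma_i+b_i\sigma_{i+1}=\theta\sigma_i$ for $0\le i\le D-1$. Two pseudo cosine sequences $\sigma_i$, $\rho_i$ form a tight pair if $(\sigma_i\rho_i)_{i=0}^D$ is a pseudo cosine sequence; reals $\theta,\theta'$ form a tight pair if their pseudo cosine sequences do. *)

From HB Require Import structures.
From mathcomp Require Import all_boot all_order all_algebra.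
From mathcomp Require Import reals.
Set Implicit Arguments. Unset Strict Implicit. Unset Printing Implicit Defensive.
Import Order.TTheory GRing.Theory Num.Theory.

Section Graph.
Variables (T : finType) (adj : rel T).

Fixpoint within (n : nat) (x y : T) : bool :=
  if n is n'.+1 then within n' x y || [exists z, within n' x z && adj z y]
  else x == y.

(* graph distance (correct for connected graphs) *)
Definition gdist (x y : T) : nat :=
  find (fun n => within n x y) (iota 0 #|T|.+1).

Definition gconnected : Prop := forall x y : T, within #|T| x y.

Definition distance_regular (D : nat) (a b c : nat -> nat) : Prop :=
  [/\ symmetric adj, irreflexive adj, gconnected,
      (forall x y, gdist x y <= D)%N /\ (exists x y, gdist x y = D) &
      forall x y : T, let i := gdist x y in
        [/\ c i = #|[set z | adj y z & (gdist x z).+1 == i]|,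
            a i = #|[set z | adj y z & gdist x z == i]| &
            b i = #|[set z | adj y z & gdist x z == i.+1]| ] ].
End Graph.

Local Open Scope ring_scope.

Section PCS.
Variables (R : realType) (D : nat) (a b c : nat -> nat).

(* sigma is the pseudo cosine sequence for theta (only indices 0..D matter) *)
Definition is_pcs (theta : R) (sigma : nat -> R) : Prop :=
  sigma 0%N = 1 /\
  forall i : nat, (i < D)%N ->
    (c i)%:R * sigma i.-1 + (a i)%:R * sigma i + (b i)%:R * sigma i.+1
    = theta * sigma i.

Definition tight_pair (theta theta' : R) : Prop :=
  exists (sigma rho : nat -> R) (eta : R),
    [/\ is_pcs theta sigma, is_pcs theta' rho &
        is_pcs eta (fun i => sigma i * rho i)].

Definition Mtri : 'M[R]_D :=
  \matrix_(i < D, j < D)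
    if (j : nat) == i.+1 then (b i)%:R
    else if (i : nat) == j.+1 then (c i)%:R
    else if ((i : nat) == j) && ((i : nat) == D.-1) then (b 0%N)%:R - (c D.-1)%:R
    else 0.
End PCS.

(* With a_i = 0 for i <= D-2, the pseudo cosine sequence for -k is (-1)^i up
   to index D-1, and the one for k is constant 1, which gives (i).
   Multiplying a pseudo cosine sequence rho for theta by the alternating one
   gives a pseudo cosine sequence (necessarily for -theta) exactly when
   2 a_{D-1} (rho_{D-1} - rho_D) = 0, i.e. rho_D = rho_{D-1}.  As the last
   diagonal entry of M is k - c_{D-1} = a_{D-1} + b_{D-1}, this says that
   (rho_0, ..., rho_{D-1}) is an eigenvector of M for theta: this gives (ii)
   and the -k case of (iii).  Finally, the recurrences at i = 0, 1 for sigma,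
   rho and their product force k c_1 (1 - sigma_1^2) (1 - rho_1^2) = 0, while
   k sigma_1 = theta, so theta or theta' is k or -k. *)

From HB Require Import structures.
From mathcomp Require Import all_boot all_order all_algebra.
From mathcomp Require Import reals.
From mathcomp Require Import zify ring.
Import Order.TTheory GRing.Theory Num.Theory.
Set Implicit Arguments. Unset Strict Implicit.

Section Distance.
Variables (T : finType) (adj : rel T).
Hypothesis conn : gconnected adj.

Lemma has_within x y : has (fun n => within adj n x y) (iota 0 #|T|.+1).
Proof. by apply/hasP; exists #|T|; [rewrite mem_iota add0n ltnSn | exact: conn]. Qed.

Lemma gdist_le n x y : within adj n x y -> (gdist adj x y <= n)%N.
Proof.
move=> Wn; have Wm : within adj (minn n #|T|) x y.
  by rewrite /minn; case: ltnP => _; [exact: Wn | exact: conn].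
apply: leq_trans (geq_minl n #|T|); rewrite leqNgt; apply/negP.
by move/(before_find 0%N); rewrite nth_iota ?add0n ?Wm // ltnS geq_minr.
Qed.

Lemma gdist_within x y : within adj (gdist adj x y) x y.
Proof.
have := nth_find 0%N (has_within x y); rewrite nth_iota //.
by rewrite -[X in (_ < X)%N](size_iota 0) -has_find has_within.
Qed.

Lemma gdist0 x : gdist adj x x = 0%N.
Proof. by apply/eqP; rewrite -leqn0; apply: (@gdist_le 0) => /=. Qed.

Lemma gdist_eq0 x y : gdist adj x y = 0%N -> x = y.
Proof. by move=> d0; apply/eqP; have := gdist_within x y; rewrite d0. Qed.

Lemma gdist_adj x y z : adj y z -> (gdist adj x z <= (gdist adj x y).+1)%N.
Proof.
move=> yz; apply: gdist_le => /=; apply/orP; right.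
by apply/existsP; exists y; rewrite gdist_within yz.
Qed.

Lemma gdist_predP x y n : gdist adj x y = n.+1 ->
  exists2 z, adj z y & gdist adj x z = n.
Proof.
move=> dxy; have := gdist_within x y; rewrite dxy /= => /orP [/gdist_le|].
  by rewrite dxy ltnn.
case/existsP => z /andP [Wz zy]; exists z => //.
apply/eqP; rewrite eqn_leq gdist_le //=.
by rewrite -ltnS -dxy gdist_adj.
Qed.

Lemma gdist_eq1 y z : irreflexive adj -> (gdist adj y z == 1%N) = adj y z.
Proof.
move=> irr; apply/idP/idP => [/eqP d1|yz].
  by have [w wz /gdist_eq0 ->] := gdist_predP d1.
have := gdist_adj y yz; rewrite gdist0 eqn_leq => -> /=; rewrite lt0n.
by apply: contraL yz => /eqP/gdist_eq0 <-; rewrite irr.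
Qed.

End Distance.

Lemma sum_bool_card (T : finType) (A P : pred T) :
  (\sum_(z | A z) P z = #|[set z | A z && P z]|)%N.
Proof. by rewrite -sum1dep_card big_mkcondr; apply: eq_bigr => z _; case: (P z). Qed.

Section DistanceRegular.
Variables (T : finType) (adj : rel T) (D : nat) (a b c : nat -> nat).
Hypothesis drg : distance_regular adj D a b c.

Let sym : symmetric adj. Proof. by case: drg. Qed.
Let irr : irreflexive adj. Proof. by case: drg. Qed.
Let conn : gconnected adj. Proof. by case: drg. Qed.

Lemma drg_valency y : #|[set z | adj y z]| = b 0.
Proof.
case: drg => _ _ _ _ /(_ y y) /=; rewrite gdist0 // => -[_ _ ->].
by apply: eq_card => z; rewrite !inE gdist_eq1 // andbb.
Qed.

Lemma drg_gdist_onto i : (i <= D)%N -> exists x y, gdist adj x y = i.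
Proof.
case: drg => _ _ _ [_ [x [w dxw]]] _ leiD; exists x.
suff [z dxz] : exists z, gdist adj x z = (D - (D - i))%N.
  by exists z; rewrite dxz subKn.
elim: (D - i)%N (leq_subr i D) => [|m IHm] lemD; first by exists w; rewrite subn0.
have [z dxz] := IHm (ltnW lemD).
have [y _ dxy] : exists2 y, adj y z & gdist adj x y = (D - m.+1)%N.
  by apply: (gdist_predP conn); rewrite dxz subnSK.
by exists y.
Qed.

Lemma drg_b_gt0 i : (i < D)%N -> (0 < b i)%N.
Proof.
move=> ltiD; have [x [z dxz]] := drg_gdist_onto ltiD.
have [y yz dxy] := gdist_predP conn dxz.
case: drg => _ _ _ _ /(_ x y) /=; rewrite dxy => -[_ _ ->].
by apply/card_gt0P; exists z; rewrite inE dxz yz eqxx.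
Qed.

Lemma drg_c1 : (1 <= D)%N -> c 1 = 1%N.
Proof.
move=> le1D; have [x [y dxy]] := drg_gdist_onto le1D.
case: drg => _ _ _ _ /(_ x y) /=; rewrite dxy => -[-> _ _].
suff -> : [set z | adj y z & (gdist adj x z).+1 == 1%N] = [set x] by rewrite cards1.
apply/setP => z; rewrite !inE eqSS.
apply/andP/eqP => [[_ /eqP/(gdist_eq0 conn) //]|->].
by rewrite gdist0 // sym -(gdist_eq1 conn) // dxy.
Qed.

Lemma drg_intersection_sum i : (i <= D)%N -> (c i + a i + b i = b 0)%N.
Proof.
move=> leiD; have [x [y dxy]] := drg_gdist_onto leiD.
case: drg => _ _ _ _ /(_ x y) /=; rewrite dxy => -[-> -> ->].
rewrite -(drg_valency y) -!sum_bool_card -!big_split -sum1dep_card /=.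
apply: eq_bigr => z yz.
have := gdist_adj conn x yz; rewrite sym in yz; have := gdist_adj conn x yz.
by rewrite dxy; do ?case: eqP => ?; lia.
Qed.

End DistanceRegular.

Local Open Scope ring_scope.

Lemma tight_pair_sym (R : realType) D (a b c : nat -> nat) (th th' : R) :
  tight_pair D a b c th th' -> tight_pair D a b c th' th.
Proof.
case=> s [r [e [ps pr [sr0 sr_rec]]]]; exists r, s, e; split=> //.
split=> [|i /sr_rec]; first by rewrite mulrC.
by rewrite ![r _ * _]mulrC.
Qed.

Section PseudoCosine.
Variables (R : realType) (D : nat) (a b c : nat -> nat).
Hypothesis b_gt0 : forall i, (i < D)%N -> (0 < b i)%N.

Definition pcs_rec (th : R) (s : nat -> R) : Prop :=
  forall i, (i < D)%N ->
    (c i)%:R * s i.-1 + (a i)%:R * s i + (b i)%:R * s i.+1 = th * s i.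

Lemma b_neq0 i : (i < D)%N -> (b i)%:R != 0 :> R.
Proof. by move/b_gt0; rewrite pnatr_eq0 -lt0n. Qed.

(* pcs_pair th n = (s_{n-1}, s_n), with the convention s_{-1} = s_0 of [is_pcs] *)
Fixpoint pcs_pair (th : R) (n : nat) : R * R :=
  if n is m.+1 then
    let: (p, q) := pcs_pair th m in
    (q, (th * q - (c m)%:R * p - (a m)%:R * q) / (b m)%:R)
  else (1, 1).

Definition pcs_seq (th : R) (n : nat) : R := (pcs_pair th n).2.

Lemma pcs_seqP th : is_pcs D a b c th (pcs_seq th).
Proof.
split=> // i ltiD; rewrite /pcs_seq /=.
have -> : (pcs_pair th i.-1).2 = (pcs_pair th i).1.
  by case: i {ltiD} => //= i; case: (pcs_pair th i).
case: (pcs_pair th i) => p q /=.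
rewrite mulrCA mulfV ?b_neq0 // mulr1; ring.
Qed.

Lemma pcs_rec_normalize th s :
  pcs_rec th s -> s 0%N != 0 -> is_pcs D a b c th (fun i => s i / s 0%N).
Proof.
move=> rec s0; split=> [|i ltiD]; first exact: divff.
by rewrite !mulrA -!mulrDl rec.
Qed.

Lemma pcs_rec_eq0 th s : pcs_rec th s -> s 0%N = 0 ->
  forall i, (i <= D)%N -> s i = 0.
Proof.
move=> rec s0.
have step i : (i < D)%N -> s i.-1 = 0 -> s i = 0 -> s i.+1 = 0.
  move=> ltiD si1 si; move: (rec i ltiD); rewrite si1 si !mulr0 !add0r.
  by move/eqP; rewrite mulf_eq0 (negbTE (b_neq0 ltiD)) => /eqP.
suff zero2 i : (i < D)%N -> s i = 0 /\ s i.+1 = 0.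
  by case=> [|i] // leiD; case: (zero2 i leiD).
elim: i => [|i IHi] ltiD; first by split=> //; apply: step.
have [si si1] := IHi (ltnW ltiD); split=> //; exact: step.
Qed.

Hypothesis cab_eq : forall i, (i < D)%N -> (c i + a i + b i = b 0)%N.

Lemma tight_pair_valency (th : R) : tight_pair D a b c th (b 0%N)%:R.
Proof.
have [s0 rec] := pcs_seqP th.
exists (pcs_seq th), (fun=> 1), th; split=> //.
  by split=> // i ltiD; rewrite !mulr1 -!natrD cab_eq.
by split=> [|i /rec]; rewrite !mulr1.
Qed.

End PseudoCosine.

Section Tridiagonal.
Variables (R : realType) (D : nat) (b c : nat -> nat).

Lemma Mtri_mul_entry (f : nat -> R) (i j : 'I_D) :
  f j * Mtri R D b c i j =
  (if (0 < i)%N && (j == i.-1 :> nat) then (c i)%:R * f i.-1 else 0) +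
  (if (i == D.-1 :> nat) && (j == i :> nat)
   then ((b 0%N)%:R - (c D.-1)%:R) * f i else 0) +
  (if j == i.+1 :> nat then (b i)%:R * f i.+1 else 0).
Proof.
rewrite mxE mulrC; case: (ltngtP j i) => [ltji|ltij|/val_inj ->] /=.
- have -> : (0 < i)%N && (j == i.-1 :> nat) = (i == j.+1 :> nat) by lia.
  have -> : (j == i.+1 :> nat) = false by lia.
  rewrite andbF !addr0.
  by case: eqP => [->|_]; rewrite ?mul0r.
- have [-> ->] : (0 < i)%N && (j == i.-1 :> nat) = false /\
    (i == j.+1 :> nat) = false by split; lia.
  by rewrite andbF !add0r; case: eqP => [->|_]; rewrite ?mul0r.
- have [-> ->] : (i == i.+1 :> nat) = false /\
    (0 < i)%N && (i == i.-1 :> nat) = false by split; lia.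
  by rewrite add0r addr0 andbT; case: ifP; rewrite ?mul0r.
Qed.

Lemma Mtri_row_sum (f : nat -> R) (i : 'I_D) :
  ((\row_(j < D) f j) *m (Mtri R D b c)^T) 0 i =
  (if (0 < i)%N then (c i)%:R * f i.-1 else 0) +
  (if i == D.-1 :> nat then ((b 0%N)%:R - (c D.-1)%:R) * f i else 0) +
  (if (i.+1 < D)%N then (b i)%:R * f i.+1 else 0).
Proof.
rewrite mxE; under eq_bigr => j _ do rewrite [_ 0 j]mxE [_^T j i]mxE Mtri_mul_entry.
rewrite !big_split /= -!big_mkcond (big_ord1_eq _ (fun=> _)).
rewrite (big_ord1_cond_eq _ (fun=> _) (fun=> (0 < i)%N)).
rewrite (big_ord1_cond_eq _ (fun=> _) (fun=> i == D.-1 :> nat)) ltn_ord.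
by rewrite (leq_ltn_trans (leq_pred i) (ltn_ord i)).
Qed.

End Tridiagonal.

Lemma eigenvalue_trmx (F : fieldType) n (A : 'M[F]_n) x :
  eigenvalue A^T x = eigenvalue A x.
Proof.
rewrite /eigenvalue /eigenspace !kermx_eq0 /row_free -[in RHS]mxrank_tr.
by rewrite linearB /= tr_scalar_mx.
Qed.

Section TightPairs.
Variables (R : realType) (D : nat) (a b c : nat -> nat).
Hypothesis D_ge3 : (3 <= D)%N.
Hypothesis a_eq0 : forall i, (i <= D - 2)%N -> a i = 0%N.
Hypothesis a_gt0 : (0 < a D.-1)%N.
Hypothesis b_gt0 : forall i, (i < D)%N -> (0 < b i)%N.
Hypothesis c1_gt0 : (0 < c 1)%N.
Hypothesis cab_eq : forall i, (i < D)%N -> (c i + a i + b i = b 0)%N.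

Local Notation k := ((b 0%N)%:R : R).
Local Notation pcs := (is_pcs D a b c).
Local Notation M := (Mtri R D b c).

Lemma cab_eqR i : (i < D)%N -> (c i)%:R + (a i)%:R + (b i)%:R = k.
Proof. by move=> ltiD; rewrite -!natrD cab_eq. Qed.

Lemma c0_eq0 : c 0 = 0%N.
Proof. by have := cab_eq (ltnW (ltnW D_ge3)); lia. Qed.

Lemma pcs_at1 th s : pcs th s -> k * s 1%N = th.
Proof.
case=> s0 rec; have := rec 0%N (ltnW (ltnW D_ge3)).
by rewrite c0_eq0 a_eq0 // s0 !mul0r !add0r mulr1.
Qed.

Lemma c_signr_pred i : (c i)%:R * (-1) ^+ i.-1 = - ((c i)%:R * (-1) ^+ i) :> R.
Proof.
by case: i => [|i]; rewrite ?c0_eq0 ?mul0r ?oppr0 // exprS mulN1r mulrN opprK.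
Qed.

Lemma pcs_negk_alt s : pcs (-k) s -> forall i, (i <= D.-1)%N -> s i = (-1) ^+ i.
Proof.
case=> s0 rec; suff alt2 i : (i <= D.-1)%N -> s i.-1 = (-1) ^+ i.-1 /\ s i = (-1) ^+ i.
  by move=> i /alt2[].
elim: i => [|i IHi] leiD; first by rewrite s0.
have [si1 si] := IHi (ltnW leiD); split=> //.
have ltiD : (i < D)%N by lia.
have ai0 : a i = 0%N by apply: a_eq0; lia.
apply: (mulfI (b_neq0 R b_gt0 ltiD)); have := rec i ltiD.
rewrite si1 si c_signr_pred ai0 mul0r addr0 -(cab_eqR ltiD) ai0 => /eqP.
by rewrite addrC subr_eq => /eqP ->; rewrite exprS; ring.
Qed.

Lemma pcs_negk_mul_step th s r : pcs (-k) s -> pcs th r ->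
  forall i, (i < D)%N ->
  (c i)%:R * (s i.-1 * r i.-1) + (a i)%:R * (s i * r i)
    + (b i)%:R * (s i.+1 * r i.+1) + th * (s i * r i)
  = if i == D.-1 then 2%:R * (a i)%:R * (-1) ^+ i * (r i - r i.+1) else 0.
Proof.
move=> ps [_ rec_r] i ltiD; have alt := pcs_negk_alt ps.
have c_s : (c i)%:R * (s i.-1 * r i.-1) = - ((-1) ^+ i * ((c i)%:R * r i.-1)).
  rewrite (alt i.-1); last by lia.
  by rewrite mulrA c_signr_pred; ring.
have th_r : th * (s i * r i) = (-1) ^+ i * (th * r i).
  by rewrite (alt i); [ring | lia].
rewrite c_s th_r -(rec_r i ltiD) (alt i); last by lia.
case: eqP => [iD|neiD].
  have bs : (b i)%:R * s i.+1 = - (2%:R * (a i)%:R + (b i)%:R) * (-1) ^+ i.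
    have [_ /(_ i ltiD)] := ps; rewrite (alt i) ?(alt i.-1); try lia.
    by rewrite c_signr_pred -(cab_eqR ltiD) addrC => /(canRL (addrK _)) ->; ring.
  by rewrite [_ * (s i.+1 * _)]mulrA bs; ring.
rewrite a_eq0 ?(alt i.+1) ?exprS; try lia; ring.
Qed.

Lemma pcs_negk_mulP th s r : pcs (-k) s -> pcs th r ->
  pcs (- th) (fun i => s i * r i) <-> r D = r D.-1.
Proof.
move=> ps pr; have step := pcs_negk_mul_step ps pr.
have ltD1D : (D.-1 < D)%N by lia.
have D1S : D.-1.+1 = D by lia.
split=> [[_ /(_ _ ltD1D)] | rD].
  move: (step _ ltD1D); rewrite eqxx D1S mulNr => + rec; rewrite rec addNr.
  have aD : (a D.-1)%:R != 0 :> R by rewrite pnatr_eq0 -lt0n.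
  move/esym/eqP; rewrite !mulf_eq0 subr_eq0 (negbTE aD) pnatr_eq0 signr_eq0 /=.
  by move=> /eqP ->.
split=> [|i ltiD]; first by have [-> ->] := (ps.1, pr.1); rewrite mulr1.
apply/eqP; rewrite mulNr -addr_eq0 step //.
by case: (i =P D.-1) => [->|//]; rewrite D1S rD subrr mulr0.
Qed.

Lemma Mtri_row_pcs (f : nat -> R) (i : 'I_D) : f D = f D.-1 ->
  ((\row_(j < D) f j) *m M^T) 0 i =
  (c i)%:R * f i.-1 + (a i)%:R * f i + (b i)%:R * f i.+1.
Proof.
move=> fD; rewrite Mtri_row_sum; have ltiD := ltn_ord i.
have -> : (if (0 < i)%N then (c i)%:R * f i.-1 else 0) = (c i)%:R * f i.-1.
  by case: posnP => [->|//]; rewrite c0_eq0 mul0r.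
case: (i =P D.-1 :> nat) => [iD|neiD].
  have [D1S ltD1D] : D.-1.+1 = D /\ (D.-1 < D)%N by split; lia.
  by rewrite ifF ?iD ?D1S ?fD -?(cab_eqR ltD1D); [ring | lia].
rewrite ifT ?a_eq0; [ring | lia..].
Qed.

Lemma row_Mtri_eigenP th (f : nat -> R) : f D = f D.-1 ->
  (\row_(j < D) f j) *m M^T = th *: \row_(j < D) f j <-> pcs_rec D a b c th f.
Proof.
move=> fD; split=> [/rowP eig i ltiD | rec].
  by have := eig (Ordinal ltiD); rewrite Mtri_row_pcs // !mxE.
by apply/rowP=> i; rewrite Mtri_row_pcs // rec // !mxE.
Qed.

Lemma eigenvalue_MtriP th :
  eigenvalue M th <-> exists2 s, pcs th s & s D = s D.-1.
Proof.
rewrite -eigenvalue_trmx; split=> [/eigenvalueP [v eig v_neq0] | [s [s0 rec] sD]].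
  pose f j := oapp (v 0) 0 (insub (minn j D.-1) : option 'I_D).
  have vf : v = \row_(j < D) f j.
    apply/rowP=> j; rewrite mxE /f (minn_idPl _) ?valK //; have := ltn_ord j; lia.
  have fD : f D = f D.-1 by rewrite /f minnn (minn_idPr _) //; lia.
  have rec : pcs_rec D a b c th f by apply/(row_Mtri_eigenP _ fD); rewrite -vf.
  have f0 : f 0%N != 0.
    apply: contraNneq v_neq0 => f0; apply/eqP/rowP=> j.
    by rewrite vf !mxE (pcs_rec_eq0 b_gt0 rec f0) // ltnW.
  by exists (fun i => f i / f 0%N); [exact: pcs_rec_normalize | rewrite fD].
apply/eigenvalueP; exists (\row_(j < D) s j); first exact/row_Mtri_eigenP.
apply/eqP => /rowP /(_ (Ordinal (ltnW (ltnW D_ge3)))); rewrite !mxE s0 => /eqP.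
by rewrite oner_eq0.
Qed.

Lemma tight_pair_eigen_negk th : eigenvalue M th -> tight_pair D a b c th (-k).
Proof.
case/eigenvalue_MtriP=> s ps sD; apply: tight_pair_sym.
have pn := pcs_seqP a c b_gt0 (-k).
by exists (pcs_seq a b c (-k)), s, (- th); split=> //; apply/pcs_negk_mulP.
Qed.

Lemma tight_pair_negk_eigen th : tight_pair D a b c (-k) th -> eigenvalue M th.
Proof.
case=> s [r [e [ps pr pe]]]; apply/eigenvalue_MtriP; exists r => //.
have s1 : s 1%N = -1 by rewrite (pcs_negk_alt ps) //; lia.
have ee : e = - th by rewrite -(pcs_at1 pe) -(pcs_at1 pr) s1; ring.
by apply/(pcs_negk_mulP ps pr); rewrite -ee.
Qed.

Lemma tight_pair_first_steps (th th' e : R) (s r : nat -> R) :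
  pcs th s -> pcs th' r -> pcs e (fun i => s i * r i) ->
  (1 - s 1%N ^+ 2) * (1 - r 1%N ^+ 2) = 0.
Proof.
move=> ps pr pe.
have lt1D : (1 < D)%N by lia.
have a1 : a 1%N = 0%N by apply: a_eq0; lia.
have step1 (th1 : R) q : pcs th1 q -> (b 1%N)%:R * q 2%N = k * q 1%N ^+ 2 - (c 1%N)%:R.
  move=> pq; have [q0 /(_ _ lt1D)] := pq; rewrite /= q0 a1 mul0r addr0 mulr1.
  by rewrite -(pcs_at1 pq) => /(canRL (addKr _)) ->; ring.
have key : (b 1%N)%:R * s 2%N * ((b 1%N)%:R * r 2%N)
    - (b 1%N)%:R * (k * (s 1%N ^+ 2 * r 1%N ^+ 2) - (c 1%N)%:R) = 0.
  by rewrite -exprMn -(step1 _ _ pe); ring.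
rewrite (step1 _ _ ps) (step1 _ _ pr) in key.
have ck : (c 1%N)%:R * k != 0 by rewrite mulf_neq0 // pnatr_eq0 -lt0n // b_gt0; lia.
by apply: (mulfI ck); rewrite mulr0 -key -(cab_eqR lt1D) a1; ring.
Qed.

Lemma pcs_at1_sqr_eq1 th s : pcs th s -> s 1%N ^+ 2 = 1 -> th = k \/ th = -k.
Proof.
move=> ps /eqP; rewrite sqrf_eq1 -(pcs_at1 ps).
by case/orP=> /eqP ->; [left; rewrite mulr1 | right; rewrite mulrN1].
Qed.

Lemma tight_pair_classification th th' : tight_pair D a b c th th' ->
  [\/ th = k, th' = k, th = -k /\ eigenvalue M th'
     | th' = -k /\ eigenvalue M th].
Proof.
move=> tp; have [s [r [e [ps pr pe]]]] := tp.
move: (tight_pair_first_steps ps pr pe) => /eqP.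
rewrite mulf_eq0 !subr_eq0 => /orP[] /eqP/esym.
  case/(pcs_at1_sqr_eq1 ps) => thk; first exact: Or41.
  by apply: Or43; split=> //; apply: tight_pair_negk_eigen; rewrite -thk.
case/(pcs_at1_sqr_eq1 pr) => thk; first exact: Or42.
by apply: Or44; split=> //; apply/tight_pair_negk_eigen/tight_pair_sym; rewrite -thk.
Qed.

End TightPairs.

Unset Implicit Arguments. Set Strict Implicit.

Theorem theorem9p4 (R : realType) (T : finType) (adj : rel T) (D : nat)
    (a b c : nat -> nat) :
  distance_regular adj D a b c ->
  (3 <= D)%N ->
  (forall i, (i <= D - 2)%N -> a i = 0%N) ->
  a (D.-1) <> 0%N ->
  [/\ (forall theta : R, tight_pair D a b c theta (b 0%N)%:R),
      (forall theta : R, eigenvalue (Mtri R D b c) theta ->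
          tight_pair D a b c theta (- (b 0%N)%:R)) &
      (forall theta theta' : R, tight_pair D a b c theta theta' ->
          [\/ theta = (b 0%N)%:R, theta' = (b 0%N)%:R,
              theta = - (b 0%N)%:R /\ eigenvalue (Mtri R D b c) theta'
            | theta' = - (b 0%N)%:R /\ eigenvalue (Mtri R D b c) theta])].
Proof.
move=> drg D_ge3 a_eq0 /eqP; rewrite -lt0n => a_gt0.
have b_gt0 := drg_b_gt0 drg.
have c1_gt0 : (0 < c 1)%N by rewrite (drg_c1 drg) //; lia.
have cab_eq i : (i < D)%N -> (c i + a i + b i = b 0)%N.
  by move/ltnW/(drg_intersection_sum drg).
split.
- exact: tight_pair_valency.
- exact: tight_pair_eigen_negk.
- exact: tight_pair_classification.
Qed.
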